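(* Let $G=\langle V,E\rangle$ be a directed graph with non-empty finite sets of vertices $V$ (object constants) and edges $E\subseteq V\times V$, where every vertex occurs in some edge, and let $\mathcal{I}$ be a Herbrand interpretation over the signature $\{\mathit{in}\}$. Then $\mathcal{I}$ is an answer set of the modular program $\Pi_1(E)$ if and only if $\mathit{in}^{\mathcal{I}}$ is (the edge set of) a Hamiltonian cycle of $G$, i.e. the elements of $\mathit{in}^{\mathcal{I}}$ can be arranged as a directed cycle $(v_1,v_2),\dots,(v_n,v_1)$ with $v_1,\dots,v_n$ pairwise distinct and $\{v_1,\dots,v_n\}=V$.
   Context: Formulas: (F1) $\forall xy(\mathit{edge}(x,y)\to\mathit{vertex}(x))$; (F2) $\forall xy(\mathit{edge}(y,x)\to\mathit{vertex}(x))$; (F3) $\forall xy(\neg\neg\mathit{in}(x,y)\wedge\mathit{edge}(x,y)\to\mathit{in}(x,y))$; (F4) $\forall xy(\mathit{in}(x,y)\to r(x,y))$; (F5) $\forall xyz(r(x,z)\wedge r(z,y)\to r(x,y))$; (F6) $\forall xy(\neg r(x,y)\wedge\mathit{vertex}(x)\wedge\mathit{vertex}(y)\to\bot)$; (F7) $\forall xyz(\mathit{in}(x,y)\wedge\mathit{in}(x,z)\wedge\neg(y=z)\to\bot)$. $\neg G$ abbreviates $G\to\bot$. $\mathrm{SM}_{\vec{p}}[F]:=F\wedge\neg\exists\vec{U}((\vec{U}<\vec{p})\wedge F^* )$ with fresh predicate variables $\vec{U}$, where $\vec{U}<\vec{p}$ means $\bigwedge_i\forall\vec{x}(U_i(\vec{x})\to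 p_i(\vec{x}))\wedge\neg\bigwedge_i\forall\vec{x}(p_i(\vec{x})\to U_i(\vec{x}))$, and $F^*$: $F^*=F$ for atomic $F$ without members of $\vec{p}$; $p_i(\vec{t})^*=U_i(\vec{t})$; $(G\otimes H)^*=G^*\otimes H^*$ for $\otimes\in\{\wedge,\vee\}$; $(G\to H)^*=(G^*\to H^* )\wedge(G\to H)$; $(Qx\,G)^*=Qx\,G^*$. A def-module $(\vec{p}:F)$ has $\Phi((\vec{p}:F))=\mathrm{SM}_{\vec{p}}[F]$; a bare formula $F$ as a module means $(\emptyset:F)$ with $\Phi=F$. A modular program $\Pi=\langle\mathcal{S},\mathcal{M}\rangle$ has public predicates $\mathcal{S}$ and modules $\mathcal{M}$ (def-modules or modular programs), with $\Phi(\Pi)=\exists\vec{h}\bigwedge_{M\in\mathcal{M}}\Phi(M)$, $\vec{h}$ the free predicate symbols of the $\Phi(M)$ not in $\mathcal{S}$. An answer set of $\Pi$ is a Herbrand interpretation over $\mathcal{S}$ satisfying $\Phi(\Pi)$. Define $\Pi_{cn}=\langle\{\mathit{vertex},\mathit{in}\},\{(r:\mathrm{F4}\wedge\mathrm{F5}),\mathrm{F6}\}\rangle$, $\Pi_{hc}=\langle\{\mathit{vertex},\mathit{in}\},\{\Pi_{cn},\mathrm{F7}\}\rangle$, $\Pi_{sg}=\langle\{\mathit{vertex},\mathit{edge},\mathit{in}\},\{(\mathit{vertex}:\mathrm{F1}\wedge\mathrm{F2}),(\mathit{in}:\mathrm{F3})\}\rangle$, $\Pi_1=\langle\{\mathit{edge},\mathit{in}\},\{\Pi_{sg},\Pi_{hc}\}\rangle$,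 $M_E=(\mathit{edge}:\bigwedge\{\mathit{edge}(a,b)\mid(a,b)\in E\})$, and $\Pi_1(E)=\langle\{\mathit{in}\},\{\Pi_1,M_E\}\rangle$. *)

From HB Require Import structures.
From mathcomp Require Import all_boot.
Set Implicit Arguments.
Unset Strict Implicit.
Unset Printing Implicit Defensive.

Inductive psym := Pvertex | Pedge | Pin | Pr.

Definition psym_eqb (p q : psym) : bool :=
  match p, q with
  | Pvertex, Pvertex | Pedge, Pedge | Pin, Pin | Pr, Pr => true
  | _, _ => false
  end.

Lemma psym_eqP : Equality.axiom psym_eqb.
Proof. by case; case; constructor. Qed.

HB.instance Definition _ := hasDecEq.Build psym psym_eqP.

Definition arity (p : psym) : nat := if p is Pvertex then 1 else 2.

Inductive term (T : Type) := Var of nat | Const of T.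
Arguments Var {T}.

Inductive formula (T : Type) :=
| Atom of psym & seq (term T)
| Eq of term T & term T
| Bot
| And of formula T & formula T
| Or of formula T & formula T
| Imp of formula T & formula T
| Forall of nat & formula T
| Exists of nat & formula T.
Arguments Bot {T}.

Definition Neg T (F : formula T) : formula T := Imp F Bot.
Definition Top T : formula T := Neg Bot.
Definition bigAnd T (l : seq (formula T)) : formula T :=
  foldr (@And T) (Top T) l.

Section Semantics.
Variable T : Type.

(* interpretations of predicate symbols (Herbrand: universe = T) *)
Definition interp := psym -> seq T -> Prop.

Definition upd (env : nat -> T) (x : nat) (v : T) : nat -> T :=
  fun y => if y == x then v else env y.

Definition teval (env : nat -> T) (t : term T) : T :=
  match t with Var x => env x | Const c => c end.

Fixpoint eval (I : interp) (env : nat -> T) (F : formula T) : Prop :=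
  match F with
  | Atom p ts => I p (map (teval env) ts)
  | Eq t1 t2 => teval env t1 = teval env t2
  | Bot => False
  | And G H => eval I env G /\ eval I env H
  | Or G H => eval I env G \/ eval I env H
  | Imp G H => eval I env G -> eval I env H
  | Forall x G => forall v, eval I (upd env x v) G
  | Exists x G => exists v, eval I (upd env x v) G
  end.

(* evaluation of F^* : members of ps are replaced by the predicate
   variables U, implications get the extra conjunct (G -> H). *)
Fixpoint eval_star (I U : interp) (ps : seq psym) (env : nat -> T)
    (F : formula T) : Prop :=
  match F with
  | Atom p ts => if p \in ps then U p (map (teval env) ts)
                 else I p (map (teval env) ts)
  | Eq t1 t2 => teval env t1 = teval env t2
  | Bot => False
  | And G H => eval_star I U ps env G /\ eval_star I U ps env H
  | Or G H => eval_star I U ps env G \/ eval_star I U ps env H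
  | Imp G H => (eval_star I U ps env G -> eval_star I U ps env H)
               /\ (eval I env G -> eval I env H)
  | Forall x G => forall v, eval_star I U ps (upd env x v) G
  | Exists x G => exists v, eval_star I U ps (upd env x v) G
  end.

Definition ltU (U I : interp) (ps : seq psym) : Prop :=
  (forall q, q \in ps -> forall a, size a = arity q -> U q a -> I q a) /\
  ~ (forall q, q \in ps -> forall a, size a = arity q -> I q a -> U q a).

Definition SM (I : interp) (env : nat -> T) (ps : seq psym) (F : formula T)
  : Prop :=
  eval I env F /\ ~ (exists U : interp, ltU U I ps /\ eval_star I U ps env F).

Fixpoint preds (F : formula T) : seq psym :=
  match F with
  | Atom p _ => [:: p]
  | Eq _ _ | Bot => [::]
  | And G H | Or G H | Imp G H => preds G ++ preds H
  | Forall _ G | Exists _ G => preds G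
  end.

Inductive module :=
| DefMod of seq psym & formula T
| BareMod of formula T
| Prog of seq psym & seq module.

Fixpoint fpreds (M : module) : seq psym :=
  match M with
  | DefMod ps F => ps ++ preds F
  | BareMod F => preds F
  | Prog Sp ms =>
      [seq q <- flatten ((fix fl l := match l with
                                      | [::] => [::]
                                      | m :: l' => fpreds m :: fl l'
                                      end) ms) | q \in Sp]
  end.

Definition hidden (S : seq psym) (ms : seq module) : seq psym :=
  [seq q <- flatten (map fpreds ms) | q \notin S].

Definition override (I H : interp) (h : seq psym) : interp :=
  fun q => if q \in h then H q else I q.

Fixpoint msat (I : interp) (env : nat -> T) (M : module) : Prop :=
  match M with
  | DefMod ps F => SM I env ps F
  | BareMod F => eval I env F
  | Prog Sp ms =>
      exists H : interp,
        (fix all_sat l := match l with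
                          | [::] => True
                          | m :: l' => msat (override I H (hidden Sp ms)) env m
                                       /\ all_sat l'
                          end) ms
  end.

(* Phi(M) is a sentence; I satisfies it *)
Definition sat_module (I : interp) (M : module) : Prop :=
  forall env, msat I env M.

End Semantics.

Section Program.
Variable T : finType.

Definition vx : term T := Var 0.
Definition vy : term T := Var 1.
Definition vz : term T := Var 2.
Definition at1 (p : psym) (t : term T) : formula T := Atom p [:: t].
Definition at2 (p : psym) (t u : term T) : formula T := Atom p [:: t; u].

Definition F1 : formula T :=
  Forall 0 (Forall 1 (Imp (at2 Pedge vx vy) (at1 Pvertex vx))).
Definition F2 : formula T :=
  Forall 0 (Forall 1 (Imp (at2 Pedge vy vx) (at1 Pvertex vx))).
Definition F3 : formula T :=
  Forall 0 (Forall 1 (Imp (And (Neg (Neg (at2 Pin vx vy))) (at2 Pedge vx vy))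
                          (at2 Pin vx vy))).
Definition F4 : formula T :=
  Forall 0 (Forall 1 (Imp (at2 Pin vx vy) (at2 Pr vx vy))).
Definition F5 : formula T :=
  Forall 0 (Forall 1 (Forall 2
    (Imp (And (at2 Pr vx vz) (at2 Pr vz vy)) (at2 Pr vx vy)))).
Definition F6 : formula T :=
  Forall 0 (Forall 1
    (Imp (And (And (Neg (at2 Pr vx vy)) (at1 Pvertex vx)) (at1 Pvertex vy))
         Bot)).
Definition F7 : formula T :=
  Forall 0 (Forall 1 (Forall 2
    (Imp (And (And (at2 Pin vx vy) (at2 Pin vx vz)) (Neg (Eq vy vz))) Bot))).

Definition Pi_cn : module T :=
  Prog [:: Pvertex; Pin] [:: DefMod [:: Pr] (And F4 F5); BareMod F6].
Definition Pi_hc : module T :=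
  Prog [:: Pvertex; Pin] [:: Pi_cn; BareMod F7].
Definition Pi_sg : module T :=
  Prog [:: Pvertex; Pedge; Pin]
       [:: DefMod [:: Pvertex] (And F1 F2); DefMod [:: Pin] F3].
Definition Pi_1 : module T := Prog [:: Pedge; Pin] [:: Pi_sg; Pi_hc].

Definition M_E (E : {set T * T}) : module T :=
  DefMod [:: Pedge]
    (bigAnd [seq at2 Pedge (Const e.1) (Const e.2) | e <- enum E]).

Definition Pi_1E (E : {set T * T}) : module T :=
  Prog [:: Pin] [:: Pi_1; M_E E].

(* Herbrand interpretation over the signature {in}, given by the
   extension R of in; symbols outside the signature get the empty set
   (they do not occur free in Phi(Pi_1(E))). *)
Definition interp_in (R : T -> T -> Prop) : interp T :=
  fun q a => q = Pin /\
    match a with [:: x; y] => R x y | _ => False end.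

Definition answer_set_Pi_1E (E : {set T * T}) (R : T -> T -> Prop) : Prop :=
  sat_module (interp_in R) (Pi_1E E).

(* R is the edge set of a Hamiltonian cycle of G = <T, E>:
   R = {(v1,v2),...,(v_{n-1},v_n),(v_n,v1)} for an enumeration
   s = [v1;...;vn] of all vertices without repetition, all these pairs
   being edges of G ([next s v] is the cyclic successor of v in s). *)
Definition hamiltonian_cycle (E : {set T * T}) (R : T -> T -> Prop) : Prop :=
  exists s : seq T,
    [/\ uniq s, (forall v : T, v \in s),
        (forall v, v \in s -> (v, next s v) \in E) &
        (forall x y, R x y <-> (x \in s /\ y = next s x))].

End Program.

(* The proof computes the meaning of every module separately and then
   combines the results.
   - Stable models of a single-predicate definition (p : F) are the least
     extensions of p satisfying F: [SM_least] turns minimality into "p is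
     contained in any predicate P for which F^* holds", [SM_intro] is the
     converse introduction rule.
   - With these, each module is characterised explicitly: M_E makes edge
     equal to E, (vertex : F1 /\ F2) makes vertex the set of vertices
     incident to an edge, (in : F3) says in is a subset of edge,
     (r : F4 /\ F5) makes r the transitive closure of in, F6 says r is total
     on vertices and F7 says in is functional.
   - Unfolding the nested modular programs ([msat_Pi_1E]) and plugging in
     these characterisations shows that I is an answer set iff in is a
     functional subrelation of E whose transitive closure relates any two
     vertices incident to edges ([Pi_1E_conditions]).
   - Graph-theoretically, such a relation is the successor function of a
     cyclic enumeration of T, i.e. a Hamiltonian cycle ([hamiltonian_cycleP]).
   Since every vertex lies on an edge, the two characterisations coincide. *)

From Stdlib Require Import Relation_Operators Operators_Properties Setoid.
From Stdlib Require Import Classical ClassicalEpsilon FunctionalExtensionality.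
From HB Require Import structures.
From mathcomp Require Import all_boot.
Set Implicit Arguments.
Unset Strict Implicit.
Unset Printing Implicit Defensive.

Lemma clos_trans_mono (A : Type) (R1 R2 : A -> A -> Prop) :
  (forall x y, R1 x y -> R2 x y) ->
  forall x y, clos_trans A R1 x y -> clos_trans A R2 x y.
Proof.
move=> R12 x y; elim=> [u v /R12|u v w _ Ruv _ Rvw]; first exact: t_step.
exact: t_trans Ruv Rvw.
Qed.

Section StableModels.
Variable T : Type.
Implicit Types (J U : interp T) (env : nat -> T).

Definition restrict J (p : psym) (P : seq T -> Prop) : interp T :=
  fun q a => J q a /\ (q = p -> P a).

Lemma SM_least J env p F (P : seq T -> Prop) :
  SM J env [:: p] F -> eval_star J (restrict J p P) [:: p] env F ->
  forall a, size a = arity p -> J p a -> P a.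
Proof.
move=> [_ Hmin] Hstar a Ha Ja; apply: NNPP => nPa; apply: Hmin.
exists (restrict J p P); split=> //; split; first by move=> q _ b _ [].
by move=> /(_ p (mem_head _ _) a Ha Ja) [_ /(_ erefl)].
Qed.

Lemma SM_intro J env p F :
  eval J env F ->
  (forall U, eval_star J U [:: p] env F ->
     forall a, size a = arity p -> J p a -> U p a) ->
  SM J env [:: p] F.
Proof.
move=> HF Hleast; split=> // -[U [[_ notJU] HU]]; apply: notJU => q.
by rewrite inE => /eqP ->; exact: Hleast.
Qed.

Lemma eval_bigAnd_map (A : eqType) J env (f : A -> formula T) (l : seq A) :
  eval J env (bigAnd (map f l)) <-> (forall e, e \in l -> eval J env (f e)).
Proof.
elim: l => [|e l IH] /=; first by split=> // _ [].
rewrite IH; split=> [[He Hl] e'|H]; first by rewrite inE => /orP[/eqP->|/Hl].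
by split=> [|e' He']; apply: H; rewrite inE ?eqxx ?He' ?orbT.
Qed.

Lemma eval_star_bigAnd_map (A : eqType) J U ps env (f : A -> formula T) (l : seq A) :
  eval_star J U ps env (bigAnd (map f l)) <->
  (forall e, e \in l -> eval_star J U ps env (f e)).
Proof.
elim: l => [|e l IH] /=; first by split=> // _; split=> [[]|[]].
rewrite IH; split=> [[He Hl] e'|H]; first by rewrite inE => /orP[/eqP->|/Hl].
by split=> [|e' He']; apply: H; rewrite inE ?eqxx ?He' ?orbT.
Qed.

End StableModels.

Section ModuleSemantics.
Variable T : finType.
Implicit Types (J U : interp T) (env : nat -> T).

Definition incident (e : T -> T -> Prop) (v : T) : Prop :=
  exists w, e v w \/ e w v.

Lemma SM_edge_facts J env (l : seq (T * T)) :
  SM J env [:: Pedge] (bigAnd [seq at2 Pedge (Const e.1) (Const e.2) | e <- l])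
  <-> forall x y, J Pedge [:: x; y] <-> (x, y) \in l.
Proof.
split=> [SMl x y|Jl].
- have [/eval_bigAnd_map Hl _] := SMl; split=> [Jxy|]; last exact: Hl (x, y).
  pose inl a := if a is [:: u; v] then (u, v) \in l else True.
  have Hstar : eval_star J (restrict J Pedge inl) [:: Pedge] env
      (bigAnd [seq at2 Pedge (Const e.1) (Const e.2) | e <- l]).
    by apply/eval_star_bigAnd_map => -[u v] uv; split=> //; exact: (Hl (u, v)).
  exact: SM_least SMl Hstar [:: x; y] erefl Jxy.
- apply: SM_intro => [|U /eval_star_bigAnd_map Ul].
    by apply/eval_bigAnd_map => -[u v] /Jl.
  by case=> [|x [|y []]] // _ /Jl /(Ul (x, y)).
Qed.

Lemma SM_vertex J env :
  SM J env [:: Pvertex] (And (F1 T) (F2 T))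
  <-> forall v, J Pvertex [:: v] <-> incident (fun x y => J Pedge [:: x; y]) v.
Proof.
split=> [SMv v|Jv].
- have [[F1J F2J] _] := SMv.
  have src x y : J Pedge [:: x; y] -> J Pvertex [:: x] := F1J x y.
  have tgt x y : J Pedge [:: y; x] -> J Pvertex [:: x] := F2J x y.
  split=> [Jv|[w [/src|/tgt]]] //.
  pose inc a := if a is [:: u] then incident (fun x y => J Pedge [:: x; y]) u
                else True.
  have Hstar : eval_star J (restrict J Pvertex inc) [:: Pvertex] env
      (And (F1 T) (F2 T)).
    split=> x y; split=> /=; rewrite /upd /= => Exy.
    + by split; [exact: src Exy|exists y; left].
    + exact: src Exy.
    + by split; [exact: tgt Exy|exists y; right].
    + exact: tgt Exy.
  exact: SM_least SMv Hstar [:: v] erefl Jv.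
- apply: SM_intro => [|U [/= U1 U2]].
    by split=> x y /=; rewrite /upd /= => Exy; apply/Jv; exists y; [left|right].
  case=> [|v []] // _ /Jv [w [Evw|Ewv]].
  + by have [+ _] := U1 v w; rewrite /upd /=; apply.
  + by have [+ _] := U2 v w; rewrite /upd /=; apply.
Qed.

(* (in : F3) is the choice rule: any subset of edge is a stable extension. *)
Lemma SM_in_edge J env :
  SM J env [:: Pin] (F3 T)
  <-> forall x y, J Pin [:: x; y] -> J Pedge [:: x; y].
Proof.
split=> [SMin x y Jxy|in_edge].
- pose edg a := if a is [:: u; v] then J Pedge [:: u; v] else True.
  have Hstar : eval_star J (restrict J Pin edg) [:: Pin] env (F3 T).
    move=> u v /=; rewrite /upd /=; split=> [[[_ nnJ] Euv]|[nnJ _]].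
      by split; first exact: NNPP.
    exact: NNPP.
  exact: SM_least SMin Hstar [:: x; y] erefl Jxy.
- apply: SM_intro => [u v /=|U UF3]; first by rewrite /upd /= => -[nnJ _]; exact: NNPP.
  case=> [|x [|y []]] // _ Jxy.
  have [+ _] := UF3 x y; rewrite /upd /=; apply; split; last exact: in_edge.
  by split=> [[_]|]; apply.
Qed.

Lemma SM_reach J env :
  SM J env [:: Pr] (And (F4 T) (F5 T))
  <-> forall x y, J Pr [:: x; y] <-> clos_trans T (fun a b => J Pin [:: a; b]) x y.
Proof.
set tcin := clos_trans T _.
split=> [SMr x y|Jr].
- have [[F4J F5J] _] := SMr.
  have step u v : J Pin [:: u; v] -> J Pr [:: u; v] := F4J u v.
  have trans u v w : J Pr [:: u; w] -> J Pr [:: w; v] -> J Pr [:: u; v].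
    by move=> Juw Jwv; exact: F5J u v w (conj Juw Jwv).
  split=> [Jxy|]; last by elim=> [u v /step|u v w _ Juw _ Jwv] //; exact: trans Juw Jwv.
  pose reach a := if a is [:: u; v] then tcin u v else True.
  have Hstar : eval_star J (restrict J Pr reach) [:: Pr] env (And (F4 T) (F5 T)).
    split=> u v; [|move=> w]; split=> /=; rewrite /upd /=.
    + by move=> Juv; split=> [|_]; [exact: step|exact: t_step].
    + exact: step.
    + move=> [[Juw Ruw] [Jwv Rwv]]; split=> [|_]; first exact: trans Juw Jwv.
      exact: t_trans (Ruw erefl) (Rwv erefl).
    + by move=> [Juw Jwv]; exact: trans Juw Jwv.
  exact: SM_least SMr Hstar [:: x; y] erefl Jxy.
- apply: SM_intro => [|U [U4 U5]].
    split=> u v /=; rewrite /upd /=; first by move=> Juv; apply/Jr/t_step.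
    by move=> w [/Jr Ruw /Jr Rwv]; apply/Jr/(t_trans _ _ _ _ _ Ruw Rwv).
  case=> [|x [|y []]] // _ /Jr; elim=> [u v Juv|u w v _ Uuw _ Uwv].
  + by have [+ _] := U4 u v; rewrite /upd /=; apply.
  + by have [+ _] := U5 u v w; rewrite /upd /=; apply.
Qed.

Lemma eval_F6 J env :
  eval J env (F6 T)
  <-> forall x y, J Pvertex [:: x] -> J Pvertex [:: y] -> J Pr [:: x; y].
Proof.
split=> [F6J x y Vx Vy|HV x y]; last first.
  by rewrite /upd /= => -[[nR /HV Vx] /Vx]; exact: nR.
by apply: NNPP => nR; exact: F6J x y (conj (conj nR Vx) Vy).
Qed.

Lemma eval_F7 J env :
  eval J env (F7 T)
  <-> forall x y z, J Pin [:: x; y] -> J Pin [:: x; z] -> y = z.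
Proof.
split=> [F7J x y z Jxy Jxz|Hfun x y z]; last first.
  by rewrite /upd /= => -[[/Hfun Hyz /Hyz]].
by apply: NNPP => neq; exact: F7J x y z (conj (conj Jxy Jxz) neq).
Qed.
End ModuleSemantics.

Section HamiltonianCycles.
Variable T : finType.
Implicit Types (R : T -> T -> Prop) (f : T -> T).

Lemma clos_trans_iter R f : (forall x y, R x y <-> y = f x) ->
  forall x y, clos_trans T R x y <-> exists k, y = iter k.+1 f x.
Proof.
move=> Rf x y; split=> [Rxy|[k ->]].
- elim: {x y Rxy}(clos_trans_t1n _ _ _ _ Rxy) => [u v /Rf ->|u v w /Rf -> _ [k ->]].
    by exists 0.
  by exists k.+1; rewrite [RHS]iterSr.
- elim: k x => [|k IH] x; first exact/t_step/Rf.
  by rewrite iterSr; apply: t_trans (IH (f x)); apply/t_step/Rf.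
Qed.

Lemma successor_fun R : (forall x, exists y, R x y) ->
  (forall x y z, R x y -> R x z -> y = z) ->
  exists f, forall x y, R x y <-> y = f x.
Proof.
move=> Rtotal Rfun.
exists (fun x => proj1_sig (constructive_indefinite_description _ (Rtotal x))).
move=> x y; case: constructive_indefinite_description => /= fx Rxfx.
by split=> [Rxy|->]; [exact: Rfun Rxy Rxfx|].
Qed.

Lemma orbit_spans f v0 : (forall x y, exists k, y = iter k.+1 f x) ->
  [/\ uniq (orbit f v0), forall v, v \in orbit f v0
    & forall v, next (orbit f v0) v = f v].
Proof.
move=> f_trans; have in_orbit v : v \in orbit f v0.
  by have [k ->] := f_trans v0 v; rewrite -fconnect_orbit fconnect_iter.
have f_cycle : fcycle f (orbit f v0).
  by apply/(orbitPcycle 0 3); have [k /esym] := f_trans v0 v0; exists k.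
split=> [|//|v]; first exact: orbit_uniq.
by apply/esym/eqP; exact: next_cycle f_cycle (in_orbit v).
Qed.

Lemma hamiltonian_cycleP (E : {set T * T}) R (v0 : T) :
  hamiltonian_cycle E R <->
  [/\ forall x y, R x y -> (x, y) \in E,
      forall x y z, R x y -> R x z -> y = z
    & forall x y, clos_trans T R x y].
Proof.
split=> [[s [s_uniq s_all s_edges Rs]]|[RE Rfun Rtrans]].
- have Rnext x y : R x y <-> y = next s x by rewrite Rs; split=> [[]|->].
  split=> [x y /Rnext ->|x y z /Rnext -> /Rnext ->|x y]; [exact: s_edges| |] => //.
  apply/(clos_trans_iter Rnext); exists (findex (next s) (next s x) y).
  rewrite iterSr iter_findex // (fconnect_cycle (cycle_next s_uniq)) ?mem_next //.
- have Rtotal x : exists y, R x y.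
    by elim: (Rtrans x v0) => [u y Ruy|u y z _ IH _ _]; first exists y.
  have [f Rf] := successor_fun Rtotal Rfun.
  have f_trans x y : exists k, y = iter k.+1 f x by apply/(clos_trans_iter Rf).
  have [s_uniq s_all s_next] := orbit_spans v0 f_trans.
  exists (orbit f v0); split=> // [v _|x y]; rewrite s_next.
    by apply: RE; apply/Rf.
  by rewrite Rf; split=> [->|[]].
Qed.
End HamiltonianCycles.

Section ProgramSemantics.
Variable T : finType.
Implicit Types (I H : interp T) (env : nat -> T) (E : {set T * T}).

Lemma override_eq_mem I H (s1 s2 : seq psym) :
  s1 =i s2 -> override I H s1 = override I H s2.
Proof. by move=> s12; apply: functional_extensionality => q; rewrite /override s12. Qed.

Definition edge_facts E : formula T :=
  bigAnd [seq at2 Pedge (Const e.1) (Const e.2) | e <- enum E].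

Lemma hidden_Pi_1E E : hidden [:: Pin] [:: Pi_1 T; M_E E] =i [:: Pedge].
Proof.
have facts_edge : all (pred1 Pedge) (preds (edge_facts E)).
  by rewrite /edge_facts; elim: (enum E).
move=> q; rewrite /hidden /= cats0 -/(edge_facts E) !inE mem_filter.
by case: q => //=; apply/negbTE/negP => /(allP facts_edge).
Qed.

Lemma msat_Prog2 I env S (M1 M2 : module T) (h : seq psym) :
  hidden S [:: M1; M2] =i h ->
  msat I env (Prog S [:: M1; M2]) <->
  exists H, msat (override I H h) env M1 /\ msat (override I H h) env M2.
Proof.
move=> /(override_eq_mem I) hid; split=> [[H [M1H [M2H _]]]|[H [M1H M2H]]].
  by exists H; rewrite -hid.
by exists H; rewrite hid.
Qed.

Lemma msat_Prog2_closed I env S (M1 M2 : module T) :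
  hidden S [:: M1; M2] =i [::] ->
  msat I env (Prog S [:: M1; M2]) <-> msat I env M1 /\ msat I env M2.
Proof.
move=> /msat_Prog2 ->; split=> [[H]|M12]; last by exists I.
by have -> : override I H [::] = I by apply: functional_extensionality.
Qed.

Lemma msat_Pi_1E E (R : T -> T -> Prop) env :
  msat (interp_in R) env (Pi_1E E) <->
  exists He Hv Hr,
    let J1 := override (interp_in R) He [:: Pedge] in
    let J2 := override J1 Hv [:: Pvertex] in
    let J3 := override J2 Hr [:: Pr] in
    [/\ SM J1 env [:: Pedge] (edge_facts E),
        SM J2 env [:: Pvertex] (And (F1 T) (F2 T)) /\ SM J2 env [:: Pin] (F3 T),
        SM J3 env [:: Pr] (And (F4 T) (F5 T)) /\ eval J3 env (F6 T)
      & eval J2 env (F7 T)].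
Proof.
have hid_sg : hidden [:: Pedge; Pin] [:: Pi_sg T; Pi_hc T] =i [:: Pvertex] by case.
have hid_cn : hidden [:: Pvertex; Pin]
    [:: DefMod [:: Pr] (And (F4 T) (F5 T)); BareMod (F6 T)] =i [:: Pr] by case.
have hid_vx : hidden [:: Pvertex; Pedge; Pin]
    [:: DefMod [:: Pvertex] (And (F1 T) (F2 T)); DefMod [:: Pin] (F3 T)] =i [::] by case.
have hid_hc : hidden [:: Pvertex; Pin] [:: Pi_cn T; BareMod (F7 T)] =i [::] by case.
rewrite (msat_Prog2 _ _ (hidden_Pi_1E E)); split.
- move=> [He [/(msat_Prog2 _ _ hid_sg) [Hv [Msg Mhc]] SMe]].
  move: Msg Mhc => /(msat_Prog2_closed _ _ hid_vx) [SMv SMin].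
  move=> /(msat_Prog2_closed _ _ hid_hc) [/(msat_Prog2 _ _ hid_cn) [Hr [SMr F6J]] F7J].
  by exists He, Hv, Hr.
- move=> [He [Hv [Hr /= [SMe [SMv SMin] [SMr F6J] F7J]]]].
  exists He; split=> //; apply/(msat_Prog2 _ _ hid_sg); exists Hv.
  split; first exact/(msat_Prog2_closed _ _ hid_vx).
  apply/(msat_Prog2_closed _ _ hid_hc); split=> //.
  by apply/(msat_Prog2 _ _ hid_cn); exists Hr.
Qed.

Definition rel1 (P : T -> Prop) : interp T :=
  fun _ a => if a is [:: x] then P x else False.

Definition rel2 (r : T -> T -> Prop) : interp T :=
  fun _ a => if a is [:: x; y] then r x y else False.

Lemma Pi_1E_conditions E (R : T -> T -> Prop) env :
  msat (interp_in R) env (Pi_1E E) <->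
  [/\ forall x y, R x y -> (x, y) \in E,
      forall x y z, R x y -> R x z -> y = z
    & forall x y, incident (fun u v => (u, v) \in E) x ->
                  incident (fun u v => (u, v) \in E) y -> clos_trans T R x y].
Proof.
rewrite msat_Pi_1E; split.
- move=> [He [Hv [Hr /= [/SM_edge_facts Je [/SM_vertex Jv /SM_in_edge Jin]
           [/SM_reach Jr /eval_F6 Jconn] /eval_F7 Jfun]]]].
  rewrite /override /= in Je Jv Jin Jr Jconn Jfun.
  have vert v : incident (fun u w => (u, w) \in E) v -> Hv Pvertex [:: v].
    move=> [w Ew]; apply/Jv; exists w.
    by case: Ew => Ew; [left|right]; rewrite Je mem_enum.
  split=> [x y Rxy|x y z Rxy Rxz|x y /vert Vx /vert Vy].
  + by rewrite -mem_enum -Je; apply: Jin.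
  + exact: Jfun (conj erefl Rxy) (conj erefl Rxz).
  + by apply: clos_trans_mono (proj1 (Jr x y) (Jconn x y Vx Vy)) => u v [].
- move=> [RE Rfun Rconn].
  exists (rel2 (fun x y => (x, y) \in E)),
    (rel1 (incident (fun x y => (x, y) \in E))), (rel2 (clos_trans T R)).
  split=> /=.
  + by apply/SM_edge_facts => x y; rewrite mem_enum.
  + split; first exact/SM_vertex.
    by apply/SM_in_edge => x y [_ Rxy]; apply: RE.
  + split; last exact/eval_F6.
    by apply/SM_reach => x y; split; apply: clos_trans_mono => u v //=; case.
  + by apply/eval_F7 => x y z [_ Rxy] [_ Rxz]; apply: Rfun Rxy Rxz.
Qed.
End ProgramSemantics.

Theorem proposition5 (T : finType) (E : {set T * T})
  (T_nonempty : exists v : T, True)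
  (E_covers : forall v : T, exists w : T, ((v, w) \in E) || ((w, v) \in E))
  (R : T -> T -> Prop) :
  answer_set_Pi_1E E R <-> hamiltonian_cycle E R.
Proof.
have [v0 _] := T_nonempty.
have incident_all v : incident (fun x y => (x, y) \in E) v.
  by have [w /orP Ew] := E_covers v; exists w.
rewrite (hamiltonian_cycleP _ _ v0).
split=> [/(_ (fun _ => v0))|[RE Rfun Rtrans] env].
- move/Pi_1E_conditions=> [RE Rfun Rconn]; split=> // x y.
  exact: Rconn (incident_all x) (incident_all y).
- by apply/Pi_1E_conditions; split=> // x y _ _; apply: Rtrans.
Qed.
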